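(* Let $X$ be a Banach space isomorphic to a Hilbert space. Then for every nonempty bounded closed convex $C\subset X$, every $\mathfrak{cm}$-nonexpansive map $T\colon C\to C$ has a fixed point.
   Context: For a bounded convex set $C$, a nonexpansive map $T\colon C\to C$ is $\mathfrak{cm}$-nonexpansive if for all $n\in\mathbb{N}$, $y\in C$ and sequences $(u_i)_{i=1}^\infty\subset C$: $\limsup_{i\to\infty}\sup_{A\subset\{1,\dots,n\}}\|\sum_{k\in A}(Tu_{i+k}-Ty)\|\le\limsup_{i\to\infty}\sup_{A\subset\{1,\dots,n\}}\|\sum_{k\in A}(u_{i+k}-y)\|$, where $\|\cdot\|$ is the norm of $X$. *)

From HB Require Import structures.
From mathcomp Require Import all_boot all_order all_algebra.
From mathcomp Require Import all_classical all_reals all_analysis.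
Set Implicit Arguments. Unset Strict Implicit. Unset Printing Implicit Defensive.
Import Order.TTheory GRing.Theory Num.Theory.
Import numFieldNormedType.Exports.
Local Open Scope classical_set_scope.
Local Open Scope ring_scope.

(* Real inner product on a normed space H whose norm is induced by it:
   H (complete) with such an inner product is a (real) Hilbert space. *)
Definition inner_product_inducing_norm (R : realType) (H : normedModType R)
    (ip : H -> H -> R) : Prop :=
  [/\ (forall x y, ip x y = ip y x),
      (forall a x y z, ip (a *: x + y) z = a * ip x z + ip y z),
      (forall x, 0 <= ip x x),
      (forall x, ip x x = 0 -> x = 0)
    & (forall x, `|x| = Num.sqrt (ip x x))].

Definition isomorphic_to_Hilbert (R : realType) (X : normedModType R) : Prop :=
  exists (H : completeNormedModType R) (ip : H -> H -> R)
         (f : {linear X -> H}) (g : H -> X),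
    [/\ inner_product_inducing_norm ip,
        cancel f g, cancel g f,
        (exists c : R, forall x, `|f x| <= c * `|x|)
      & (exists c : R, forall h, `|g h| <= c * `|h|)].

Definition convex_subset (R : realType) (X : normedModType R) (C : set X) :=
  forall x y (t : R), C x -> C y -> 0 <= t -> t <= 1 -> C (t *: x + (1 - t) *: y).

Definition bounded_subset (R : realType) (X : normedModType R) (C : set X) :=
  exists M : R, forall x, C x -> `|x| <= M.

Definition maps_into (X : Type) (C : set X) (T : X -> X) :=
  forall x, C x -> C (T x).

Definition nonexpansive_on (R : realType) (X : normedModType R) (C : set X)
    (T : X -> X) :=
  forall x y, C x -> C y -> `|T x - T y| <= `|x - y|.

Definition cm_sup (R : realType) (X : normedModType R) (n : nat)
    (v : nat -> X) (y : X) (i : nat) : R :=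
  \big[Num.max/0]_(A : {set 'I_n}) `|\sum_(k in A) (v (i + k.+1)%N - y)|.

Definition cm_nonexpansive (R : realType) (X : normedModType R) (C : set X)
    (T : X -> X) : Prop :=
  maps_into C T /\ nonexpansive_on C T /\
  forall (n : nat) (y : X) (u : nat -> X), C y -> (forall i, C (u i)) ->
    (limn_esup (fun i => (cm_sup n (fun j => T (u j)) (T y) i)%:E)
     <= limn_esup (fun i => (cm_sup n u y i)%:E))%E.

From HB Require Import structures.
From mathcomp Require Import all_boot all_order all_algebra.
From mathcomp Require Import all_classical all_reals all_analysis.
From mathcomp Require Import zify ring lra.
Import Order.TTheory GRing.Theory Num.Theory.
Import numFieldNormedType.Exports.
Local Open Scope classical_set_scope.
Local Open Scope ring_scope.

(* Transport the problem to the Hilbert space H through the isomorphism f, with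
   inverse g.  Nonexpansiveness alone gives approximate fixed points x_n in C
   (iterate the contractions t T + (1 - t) x_0 with t close to 1).  A diagonal argument
   with Bolzano-Weierstrass extracts a subsequence c of f x_n whose off-diagonal
   Gram entries <c_i, c_j> converge to some l; the Cesaro means of c then form a
   Cauchy sequence with limit z, and <c_i - z, c_j - z> -> 0.  So the sums of the
   c_i - z over any set of m^2 late indices have norm O(m), and so do their images
   under g.  Since g z lies in C (a limit of convex combinations of points of C),
   cm-nonexpansiveness gives m^2 |T (g z) - g z| = O(m) for every m. *)

Section inner_product.
Context {R : realType} {H : normedModType R} {ip : H -> H -> R}.
Hypothesis hip : inner_product_inducing_norm ip.

Lemma ipC x y : ip x y = ip y x.
Proof. by case: hip. Qed.

Lemma ip0l y : ip 0 y = 0.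
Proof.
case: hip => _ ipDZ _ _ _; have := ipDZ 1 0 0 y.
by rewrite scaler0 addr0 mul1r => /eqP; rewrite addrC -subr_eq subrr eq_sym => /eqP.
Qed.

Lemma ipDl x y z : ip (x + y) z = ip x z + ip y z.
Proof. by case: hip => _ ipDZ _ _ _; rewrite -[x in LHS]scale1r ipDZ mul1r. Qed.

Lemma ipZl a x y : ip (a *: x) y = a * ip x y.
Proof. by case: hip => _ ipDZ _ _ _; rewrite -[_ *: x]addr0 ipDZ ip0l addr0. Qed.

Lemma ipBl x y z : ip (x - y) z = ip x z - ip y z.
Proof. by rewrite ipDl -scaleN1r ipZl mulN1r. Qed.

Lemma ipDr x y z : ip x (y + z) = ip x y + ip x z.
Proof. by rewrite ipC ipDl !(ipC x). Qed.

Lemma ipZr a x y : ip x (a *: y) = a * ip x y.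
Proof. by rewrite ipC ipZl ipC. Qed.

Lemma ipBr x y z : ip x (y - z) = ip x y - ip x z.
Proof. by rewrite ipC ipBl !(ipC x). Qed.

Lemma ip_suml I (r : seq I) (P : pred I) (F : I -> H) y :
  ip (\sum_(i <- r | P i) F i) y = \sum_(i <- r | P i) ip (F i) y.
Proof. exact: (big_morph (ip^~ y) (fun u v => ipDl u v y) (ip0l y)). Qed.

Lemma ip_sumr I (r : seq I) (P : pred I) (F : I -> H) x :
  ip x (\sum_(i <- r | P i) F i) = \sum_(i <- r | P i) ip x (F i).
Proof. by rewrite ipC ip_suml; apply: eq_bigr => i _; rewrite ipC. Qed.

Lemma sqr_norm_ip x : `|x| ^+ 2 = ip x x.
Proof. by case: hip => _ _ ip_ge0 _ ->; rewrite sqr_sqrtr. Qed.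

Lemma ip_le_norm x y : ip x y <= `|x| * `|y|.
Proof.
have : `|x + y| ^+ 2 <= (`|x| + `|y|) ^+ 2.
  by rewrite lerXn2r ?nnegrE ?addr_ge0 ?ler_normD.
rewrite sqrrD !sqr_norm_ip ipDl !ipDr (ipC y x); lra.
Qed.

Lemma norm_ip_le x y : `|ip x y| <= `|x| * `|y|.
Proof.
rewrite ler_norml ip_le_norm andbT lerNl -mulN1r -ipZl scaleN1r.
by rewrite -[`|x|]normrN ip_le_norm.
Qed.

Lemma ip_polarization x y : ip x y = (`|x + y| ^+ 2 - `|x - y| ^+ 2) / 4%:R.
Proof. by rewrite !sqr_norm_ip ipBl !ipBr ipDl !ipDr (ipC y x); field. Qed.

Lemma cvg_ip {T : Type} {F : set_system T} {FF : Filter F} {a b : T -> H} {x y : H} :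
  a @ F --> x -> b @ F --> y -> (fun t => ip (a t) (b t)) @ F --> ip x y.
Proof.
move=> ax by_; under eq_fun do rewrite ip_polarization; rewrite ip_polarization.
have cvg_sqr (v : T -> H) w : v @ F --> w -> (fun t => `|v t| ^+ 2) @ F --> `|w| ^+ 2.
  by move=> vw; apply: cvgM; exact: cvg_norm.
apply: cvgM; last exact: cvg_cst.
by apply: cvgB; apply: cvg_sqr; [exact: cvgD | exact: cvgB].
Qed.

End inner_product.

Section offdiagonal_limits.
Context {R : realType}.

Definition offdiag_cvg (F : nat -> nat -> R) (l : R) :=
  forall e, 0 < e -> exists J, forall i j, (J <= i < j)%N -> `|F i j - l| <= e.

Lemma increasing_seq_comp (f g : nat -> nat) :
  increasing_seq f -> increasing_seq g -> increasing_seq (f \o g).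
Proof. by move=> f_incr g_incr m n /=; rewrite f_incr; exact: g_incr. Qed.

Lemma increasing_seq_ge (f : nat -> nat) : increasing_seq f -> forall n, (n <= f n)%N.
Proof.
move=> /leqW_mono f_incr; elim=> // n IHn.
by apply: leq_ltn_trans IHn _; rewrite f_incr.
Qed.

Lemma bounded_fun_norm_le (r : nat -> R) (B : R) :
  (forall k, `|r k| <= B) -> bounded_fun r.
Proof.
move=> rB; exists B; split; first exact: num_real.
by move=> M BM k _; apply: le_trans (rB k) (ltW BM).
Qed.

Lemma bounded_subseq_close (r : nat -> R) (B e : R) :
  (forall k, `|r k| <= B) -> 0 < e ->
  exists2 phi, increasing_seq phi & exists mu, forall k, `|r (phi k) - mu| <= e.
Proof.
move=> rB e0.
have [f f_incr /cvg_ex[mu /cvgrPdist_le /(_ e e0) [K _ rfK]]] :=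
  bolzano_weierstrass (bounded_fun_norm_le _ _ rB).
exists (f \o (addn K)); first by apply: increasing_seq_comp => // m n; exact: leq_add2l.
by exists mu => k; rewrite distrC; apply: rfK; rewrite /= leq_addr.
Qed.

Lemma bounded_diagonal_subseq (F : nat -> nat -> R) (B : R) :
  (forall i j, `|F i j| <= B) ->
  exists2 m, increasing_seq m & exists mu : nat -> R,
    forall i j, (i < j)%N -> `|F (m i) (m j) - mu i| <= i.+1%:R^-1.
Proof.
move=> FB.
have step (j : nat) (psi : nat -> nat) : exists p : (nat -> nat) * R,
    increasing_seq psi -> [/\ increasing_seq p.1,
      forall k, exists k', p.1 k = psi k'.+1
    & forall k, `|F (psi 0%N) (p.1 k) - p.2| <= j.+1%:R^-1].
  have [psi_incr|] := pselect (increasing_seq psi); last by exists (id, 0).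
  have j0 : 0 < j.+1%:R^-1 :> R by rewrite invr_gt0.
  have [phi phi_incr [mu hmu]] :=
    bounded_subseq_close (fun k => F (psi 0%N) (psi k.+1)) B _ (fun k => FB _ _) j0.
  exists (psi \o succn \o phi, mu) => _; split => //=.
  - by apply: increasing_seq_comp => //; exact: increasing_seq_comp.
  - by move=> k; exists (phi k).
(* psi j.+1 runs through the tail of psi j, and F (psi j 0) (psi j.+1 k) stays
   within 1/(j+1) of a constant; the diagonal is m j := psi j 0. *)
have [next hnext] := choice (fun p : nat * (nat -> nat) => step p.1 p.2).
pose psi j := iteri j (fun j psi => (next (j, psi)).1) id.
have psi_incr j : increasing_seq (psi j).
  by elim: j => [//|j IHj]; have [] := hnext (j, psi j) IHj.
have psiS j k : exists k', psi j.+1 k = psi j k'.+1.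
  by have [_ tail _] := hnext (j, psi j) (psi_incr j); exact: tail.
have psi_tail j d k : exists k', psi (j + d)%N k = psi j k'.
  elim: d k => [|d IHd] k; first by exists k; rewrite addn0.
  by rewrite addnS; have [k1 ->] := psiS (j + d)%N k; exact: IHd.
exists (fun j => psi j 0%N).
  apply/increasing_seqP => j; have [k ->] := psiS j 0%N.
  exact: (leqW_mono (psi_incr j)).
exists (fun j => (next (j, psi j)).2) => i j ij.
have [_ _ close] := hnext (i, psi i) (psi_incr i).
by rewrite -(subnKC ij); have [k ->] := psi_tail i.+1 (j - i.+1)%N 0%N; exact: close.
Qed.

Lemma bounded_offdiag_cvg_subseq (F : nat -> nat -> R) (B : R) :
  (forall i j, `|F i j| <= B) ->
  exists2 m, increasing_seq m & exists l, offdiag_cvg (fun i j => F (m i) (m j)) l.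
Proof.
move=> FB; have [m m_incr [mu hmu]] := bounded_diagonal_subseq _ _ FB.
have muB i : `|mu i| <= B + 1.
  have := hmu i i.+1 (ltnSn i); rewrite distrC => /(le_trans (lerB_dist _ _)).
  rewrite lerBlDr addrC => /le_trans; apply; apply: lerD; first exact: FB.
  by rewrite invf_le1 ?ler1n.
have [tau tau_incr /cvg_ex[l /cvgrPdist_le mutau_l]] :=
  bolzano_weierstrass (bounded_fun_norm_le _ _ muB).
exists (m \o tau); first exact: increasing_seq_comp.
exists l => e e0; have e20 : 0 < e / 2 by rewrite divr_gt0.
have [J1 _ muJ1] := mutau_l _ e20.
have [J2 _ invJ2] := near_infty_natSinv_lt (PosNum e20).
exists (maxn J1 J2) => i j /andP[]; rewrite geq_max => /andP[iJ1 iJ2] ij.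
rewrite -(subrK (mu (tau i)) (F _ _)) -addrA (splitr e).
apply: le_trans (ler_normD _ _) _; apply: lerD.
  apply: le_trans (hmu _ _ _) (ltW (invJ2 _ _)); first by rewrite (leqW_mono tau_incr).
  exact: leq_trans iJ2 (increasing_seq_ge _ tau_incr i).
by rewrite distrC; exact: muJ1.
Qed.

Lemma offdiag_cvg_sym (F : nat -> nat -> R) l :
  (forall i j, F i j = F j i) -> offdiag_cvg F l ->
  forall e, 0 < e -> exists J, forall i j, (J <= i)%N -> (J <= j)%N -> i != j ->
    `|F i j - l| <= e.
Proof.
move=> Fsym Fl e e0; have [J FJ] := Fl e e0; exists J => i j Ji Jj.
by case: ltngtP => // [ij|ji] _; [|rewrite Fsym]; apply: FJ; rewrite ?Ji ?Jj.
Qed.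

Lemma increasing_seq_cvg (m : nat -> nat) : increasing_seq m -> m @ \oo --> \oo.
Proof.
move=> m_incr A [N _ NA]; exists N => // n /= Nn; apply: NA.
exact: leq_trans Nn (increasing_seq_ge _ m_incr n).
Qed.

End offdiagonal_limits.

Lemma sum_ltn_le n J : (\sum_(j < n) (j < J) <= J)%N.
Proof.
suff : (\sum_(j < n) (j < J) <= minn n J)%N by move/leq_trans; apply; exact: geq_minr.
elim: n => [|n IHn]; first by rewrite big_ord0.
by rewrite big_ord_recr /=; move: IHn; case: ltnP => nJ /= IHn; lia.
Qed.

Lemma sum_eqn_le n k : (\sum_(j < n) (j == k :> nat) <= 1)%N.
Proof.
have [kn|nk] := ltnP k n.
  rewrite (bigD1 (Ordinal kn)) //= eqxx big1 // => j jk.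
  by case: eqP => // jk'; case/negP: jk; exact/eqP/val_inj.
by rewrite big1 // => j _; rewrite ltn_eqF // (leq_trans (ltn_ord j) nk).
Qed.

Lemma sum_ltn_or_eqn_le n J k : (\sum_(j < n) ((j < J) || (j == k :> nat)) <= J.+1)%N.
Proof.
apply: (@leq_trans (\sum_(j < n) (j < J) + \sum_(j < n) (j == k :> nat))).
  by rewrite -big_split /=; apply: leq_sum => j _; case: (j < J)%N; case: (_ == _).
by rewrite -[J.+1]addn1 leq_add ?sum_ltn_le ?sum_eqn_le.
Qed.

Section means.
Context {R : realType}.

Lemma near_infty_natSinv_mul_le (A e : R) :
  0 < e -> \forall n \near \oo, A * n.+1%:R^-1 <= e.
Proof.
move=> e0; have [A0|A0] := lerP A 0.
  by near=> n; apply: le_trans (ltW e0); rewrite mulr_le0_ge0 ?invr_ge0.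
have eA : 0 < e / A by rewrite divr_gt0.
near=> n; rewrite mulrC -ler_pdivlMr //; apply: ltW.
by near: n; exact: (near_infty_natSinv_lt (PosNum eA)).
Unshelve. all: by end_near. Qed.

Lemma mean_dist_le (a : nat -> R) (exc : pred nat) (l e K : R) n :
  (forall j, `|a j - l| <= e + K * (exc j)%:R) ->
  `|n.+1%:R^-1 * \sum_(j < n.+1) a j - l| <=
    e + K * ((\sum_(j < n.+1) exc j)%N%:R / n.+1%:R).
Proof.
move=> a_exc; have n0 : n.+1%:R != 0 :> R by rewrite pnatr_eq0.
have -> : n.+1%:R^-1 * \sum_(j < n.+1) a j - l =
    n.+1%:R^-1 * \sum_(j < n.+1) (a j - l).
  by rewrite sumrB sumr_const card_ord mulrBr -mulr_natr; congr (_ - _); field.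
rewrite normrM ger0_norm ?invr_ge0 ?ler0n //.
have -> : e + K * ((\sum_(j < n.+1) exc j)%N%:R / n.+1%:R) =
    n.+1%:R^-1 * \sum_(j < n.+1) (e + K * (exc j)%:R).
  by rewrite big_split /= sumr_const card_ord -mulr_sumr natr_sum -mulr_natr; field.
apply: ler_wpM2l; first by rewrite invr_ge0 ler0n.
by apply: le_trans (ler_norm_sum _ _ _) _; apply: ler_sum => j _.
Qed.

End means.

Definition cesaro_mean {R : fieldType} {V : lmodType R} (c : nat -> V) (n : nat) : V :=
  n.+1%:R^-1 *: \sum_(i < n.+1) c i.

Lemma linear_cesaro_mean {R : fieldType} {U V : lmodType R} (f : {linear U -> V})
  (c : nat -> U) n : f (cesaro_mean c n) = cesaro_mean (f \o c) n.
Proof. by rewrite /cesaro_mean linearZ linear_sum. Qed.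

Lemma norm_cesaro_mean_le {R : realType} {V : normedModType R} (c : nat -> V) (L : R) n :
  (forall k, `|c k| <= L) -> `|cesaro_mean c n| <= L.
Proof.
move=> cL; rewrite /cesaro_mean normrZ ger0_norm ?invr_ge0 ?ler0n // mulrC.
rewrite ler_pdivrMr ?ltr0n //; apply: le_trans (ler_norm_sum _ _ _) _.
have -> : L * n.+1%:R = \sum_(i < n.+1) L by rewrite sumr_const card_ord mulr_natr.
by apply: ler_sum => i _.
Qed.

Lemma cesaro_mean_convex {R : realType} {X : normedModType R} (C : set X) (c : nat -> X) :
  convex_subset C -> (forall i, C (c i)) -> forall n, C (cesaro_mean c n).
Proof.
move=> cvx Cc; elim => [|n IHn]; first by rewrite /cesaro_mean big_ord1 invr1 scale1r.
have t0 : 0 <= n.+1%:R / n.+2%:R :> R by rewrite divr_ge0.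
have t1 : n.+1%:R / n.+2%:R <= 1 :> R by rewrite ler_pdivrMr ?mul1r ?ler_nat ?ltr0n.
have := cvx _ _ _ IHn (Cc n.+1) t0 t1; congr C.
rewrite /cesaro_mean [in RHS]big_ord_recr /= [in RHS]scalerDr scalerA.
have n2 : n.+2%:R != 0 :> R by rewrite pnatr_eq0.
congr (_ *: _ + _ *: _); first by rewrite mulrAC divff // mul1r.
by rewrite -{1}(divff n2) -mulrBl -natrB // subSnn mul1r.
Qed.

Section weak_limit.
Context {R : realType} {H : completeNormedModType R} {ip : H -> H -> R}.
Hypothesis hip : inner_product_inducing_norm ip.

Lemma ip_cesaro_r x (c : nat -> H) n :
  ip x (cesaro_mean c n) = n.+1%:R^-1 * \sum_(j < n.+1) ip x (c j).
Proof. by rewrite /cesaro_mean (ipZr hip) (ip_sumr hip). Qed.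

Lemma ip_cesaro_l (c : nat -> H) x n :
  ip (cesaro_mean c n) x = n.+1%:R^-1 * \sum_(i < n.+1) ip (c i) x.
Proof. by rewrite /cesaro_mean (ipZl hip) (ip_suml hip). Qed.

Variables (c : nat -> H) (L l : R).
Hypotheses (cL : forall k, `|c k| <= L)
  (c_gram : offdiag_cvg (fun i j => ip (c i) (c j)) l).

Let K := L * L + `|l|.

Let K_ge0 : 0 <= K.
Proof. by rewrite addr_ge0 ?mulr_ge0 // (le_trans _ (cL 0%N)). Qed.

Let ip_dist_le x y : `|x| <= L -> `|y| <= L -> `|ip x y - l| <= K.
Proof.
move=> xL yL; apply: le_trans (ler_normB _ _) _; rewrite lerD2r.
apply: le_trans (norm_ip_le hip _ _) _.
by apply: ler_pM => //; exact: normr_ge0.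
Qed.

Lemma ip_cesaro_row_near e : 0 < e -> exists J,
  \forall P \near \oo, forall k, (J <= k)%N -> `|ip (c k) (cesaro_mean c P) - l| <= e.
Proof.
move=> e0; have e20 : 0 < e / 2 by rewrite divr_gt0.
have [J cJ] := offdiag_cvg_sym _ _ (fun i j => ipC hip (c i) (c j)) c_gram _ e20.
exists J; near=> P => k Jk; rewrite ip_cesaro_r (splitr e).
pose exc j := (j < J)%N || (j == k).
apply: le_trans (mean_dist_le (fun j => ip (c k) (c j)) exc l (e / 2) K P _) _ => [j|].
  rewrite /exc; case: (ltnP j J) => [_|Jj] /=.
    by rewrite mulr1 ler_wpDl ?ip_dist_le // ltW.
  case: eqVneq => [->|jk] /=; first by rewrite mulr1 ler_wpDl ?ip_dist_le // ltW.
  by rewrite mulr0 addr0 cJ // eq_sym.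
rewrite lerD2l; apply: le_trans (_ : K * (J.+1%:R / P.+1%:R) <= _).
  apply: ler_wpM2l => //.
  apply: ler_wpM2r; first by rewrite invr_ge0.
  by rewrite ler_nat sum_ltn_or_eqn_le.
rewrite mulrA; near: P; exact: near_infty_natSinv_mul_le.
Unshelve. all: by end_near. Qed.

Lemma ip_cesaro_near e : 0 < e -> exists N0, forall N P, (N0 <= N)%N -> (N0 <= P)%N ->
  `|ip (cesaro_mean c N) (cesaro_mean c P) - l| <= e.
Proof.
move=> e0; have e20 : 0 < e / 2 by rewrite divr_gt0.
have [J [P0 _ rowJ]] := ip_cesaro_row_near _ e20.
have [N1 _ smallN] := near_infty_natSinv_mul_le (K * J%:R) _ e20.
exists (maxn P0 N1) => N P; rewrite !geq_max => /andP[_ N1N] /andP[P0P _].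
rewrite ip_cesaro_l (splitr e).
apply: le_trans (mean_dist_le (fun i => ip (c i) (cesaro_mean c P)) (fun i => (i < J)%N) l
  (e / 2) K N _) _ => [i|].
  case: ltnP => [_|Ji]; last by rewrite mulr0 addr0; exact: rowJ.
  by rewrite mulr1 ler_wpDl ?ip_dist_le ?(norm_cesaro_mean_le _ _ _ cL) // ltW.
rewrite lerD2l; apply: le_trans (smallN _ N1N); rewrite -mulrA ler_wpM2l //.
by rewrite ler_wpM2r ?invr_ge0 // ler_nat sum_ltn_le.
Qed.

Lemma cvg_cesaro_mean : cvgn (cesaro_mean c).
Proof.
apply/cauchy_cvgP/cauchy_exP => e e0.
have [N0 gramN0] := ip_cesaro_near (e ^+ 2 / 8%:R) ltac:(by rewrite divr_gt0 ?exprn_gt0).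
exists (cesaro_mean c N0), N0 => // N /= N0N; rewrite -ball_normE /=.
have := gramN0 _ _ (leqnn N0) (leqnn N0); have := gramN0 _ _ (leqnn N0) N0N.
have := gramN0 _ _ N0N (leqnn N0); have := gramN0 _ _ N0N N0N.
have := sqr_norm_ip hip (cesaro_mean c N0 - cesaro_mean c N).
have := normr_ge0 (cesaro_mean c N0 - cesaro_mean c N).
set x := `|_|; rewrite (ipBl hip) !(ipBr hip) !ler_norml.
move=> x0 sqx /andP[? ?] /andP[? ?] /andP[? ?] /andP[? ?]; nra.
Qed.

Lemma cesaro_mean_weak_limit :
  exists2 z, cesaro_mean c @ \oo --> z & offdiag_cvg (fun i j => ip (c i - z) (c j - z)) 0.
Proof.
have /cvg_ex[z cz] := cvg_cesaro_mean; exists z => //.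
have ip_zz : ip z z = l.
  have gram_l : (fun N => ip (cesaro_mean c N) (cesaro_mean c N)) @ \oo --> l.
    apply/cvgrPdist_le => e e0; have [N0 gramN0] := ip_cesaro_near _ e0.
    by exists N0 => // N /= N0N; rewrite distrC; exact: gramN0.
  exact: (norm_cvg_unique (cvg_ip hip cz cz) gram_l).
have ip_cz e : 0 < e -> exists J, forall k, (J <= k)%N -> `|ip (c k) z - l| <= e.
  move=> e0; have [J [P0 _ rowJ]] := ip_cesaro_row_near _ e0; exists J => k Jk.
  apply: (cvgr_to_le (F := \oo) (f := fun P => `|ip (c k) (cesaro_mean c P) - l|)).
    apply: cvg_norm; apply: cvgB (cvg_cst _).
    by apply: (cvg_ip hip _ cz); exact: cvg_cst.
  by exists P0 => // P P0P; exact: rowJ.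
move=> e e0; have e30 : 0 < e / 3%:R by rewrite divr_gt0.
have [J1 czJ1] := ip_cz _ e30; have [J2 gramJ2] := c_gram _ e30.
exists (maxn J1 J2) => i j /andP[]; rewrite geq_max => /andP[J1i J2i] ij.
have := czJ1 i J1i; have := czJ1 j (leq_trans J1i (ltnW ij)).
have := gramJ2 i j; rewrite J2i ij => /(_ isT).
rewrite subr0 (ipBl hip) !(ipBr hip) ip_zz (ipC hip z (c j)) !ler_norml.
have : e / 3%:R * 3%:R = e by rewrite divfK ?pnatr_eq0.
lra.
Qed.

End weak_limit.

Lemma bounded_seq_weak_limit_subseq {R : realType} {H : completeNormedModType R}
    {ip : H -> H -> R} (hip : inner_product_inducing_norm ip) (a : nat -> H) (L : R) :
  (forall k, `|a k| <= L) ->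
  exists2 m, increasing_seq m & exists2 z, cesaro_mean (a \o m) @ \oo --> z &
    offdiag_cvg (fun i j => ip (a (m i) - z) (a (m j) - z)) 0.
Proof.
move=> aL; have a_gram i j : `|ip (a i) (a j)| <= L * L.
  by apply: le_trans (norm_ip_le hip _ _) _; apply: ler_pM => //; exact: normr_ge0.
have [m m_incr [l gram]] := bounded_offdiag_cvg_subseq _ _ a_gram.
by exists m => //; exact: cesaro_mean_weak_limit hip (a \o m) L l (fun k => aL (m k)) gram.
Qed.

Section almost_orthogonal_sums.
Context {R : realType} {H : normedModType R} {ip : H -> H -> R}.
Hypothesis hip : inner_product_inducing_norm ip.

Lemma sqr_norm_sum_le {I : finType} (A : {set I}) (v : I -> H) (L e : R) :
  0 <= e -> (forall k, `|v k| <= L) -> (forall k l, k != l -> `|ip (v k) (v l)| <= e) ->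
  `|\sum_(k in A) v k| ^+ 2 <= #|A|%:R * (L ^+ 2 + #|A|%:R * e).
Proof.
move=> e0 vL v_orth; rewrite (sqr_norm_ip hip) (ip_suml hip) mulr_natl -sumr_const.
apply: ler_sum => k kA; rewrite (ip_sumr hip) (bigD1 k) //=; apply: lerD.
  by rewrite -(sqr_norm_ip hip) lerXn2r ?nnegrE ?vL // (le_trans _ (vL k)).
apply: (@le_trans _ _ (\sum_(l in A | l != k) e)).
  apply: ler_sum => l /andP[_ lk].
  by apply: le_trans (ler_norm _) (v_orth _ _ _); rewrite eq_sym.
by rewrite mulr_natl -sumr_const [X in _ <= X](bigD1 k) //=; exact: ler_wpDl.
Qed.

Lemma norm_sum_le_sqrt_card (m : nat) (A : {set 'I_(m * m)%N}) (v : 'I_(m * m)%N -> H)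
    (L : R) :
  (0 < m)%N -> (forall k, `|v k| <= L) ->
  (forall k l, k != l -> `|ip (v k) (v l)| <= L ^+ 2 / (m * m)%N%:R) ->
  `|\sum_(k in A) v k| <= 2 * m%:R * L.
Proof.
move=> m0 vL v_orth.
have L0 : 0 <= L.
  have mm : (0 < m * m)%N by rewrite muln_gt0 m0.
  exact: le_trans (normr_ge0 _) (vL (Ordinal mm)).
have mm0 : 0 < (m * m)%N%:R :> R by rewrite ltr0n muln_gt0 m0.
have e0 : 0 <= L ^+ 2 / (m * m)%N%:R by rewrite divr_ge0 ?sqr_ge0 ?ltW.
have sq := sqr_norm_sum_le A v L _ e0 vL v_orth.
have cardA : #|A|%:R <= (m * m)%N%:R :> R.
  by rewrite ler_nat (leq_trans (max_card _)) ?card_ord.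
suff : `|\sum_(k in A) v k| ^+ 2 <= (2 * m%:R * L) ^+ 2.
  by rewrite ler_sqr ?nnegrE ?mulr_ge0 ?ler0n.
apply: le_trans sq _.
have -> : (2 * m%:R * L) ^+ 2 = 4%:R * ((m * m)%N%:R * L ^+ 2) by rewrite natrM; ring.
have : #|A|%:R * (L ^+ 2 / (m * m)%N%:R) <= L ^+ 2.
  by rewrite mulrA ler_pdivrMr // mulrC; apply: ler_wpM2l => //; exact: sqr_ge0.
have : 0 <= #|A|%:R :> R by [].
move: (L ^+ 2) (sqr_ge0 L) => s s0; nra.
Qed.

End almost_orthogonal_sums.

Section limf_esup_near.
Context {R : realType} {T : choiceType} {X : filteredType T}.
Local Open Scope ereal_scope.

Lemma limf_esup_le_near {F : set_system X} {f : X -> \bar R} {b : \bar R} :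
  (\forall x \near F, f x <= b) -> limf_esup f F <= b.
Proof.
move=> Fb; rewrite limf_esupE; apply: le_trans (ereal_inf_lbound _) _.
  by exists [set x | f x <= b].
by apply: ge_ereal_sup => _ [x fxb <-].
Qed.

Lemma limf_esup_ge_near {F : set_system X} {FF : ProperFilter F} {f : X -> \bar R}
    {b : \bar R} :
  (\forall x \near F, b <= f x) -> b <= limf_esup f F.
Proof.
move=> Fb; rewrite limf_esupE; apply: le_ereal_inf_tmp => _ [V FV <-].
have [x [Vx bx]] := filter_ex (filterI FV Fb).
by apply: le_trans bx (ereal_sup_ubound _); exists x.
Qed.

End limf_esup_near.

Lemma le0_of_bounded_natmul {R : realType} (a b : R) :
  (forall m, (0 < m)%N -> m%:R * a <= b) -> a <= 0.
Proof.
move=> ab; rewrite leNgt; apply/negP => a0.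
have [N _ /= bN] := nbhs_infty_ger (b / a + 1).
have := ler_wpM2r (ltW a0) (bN N.+1 (leqW (leqnn N))).
rewrite mulrDl divfK ?gt_eqF // mul1r; have := ab N.+1 isT; lra.
Qed.

Section cm_displacement.
Context {R : realType} {X : normedModType R}.

Lemma norm_sum_le_cm_sup (n : nat) (u : nat -> X) (z : X) i :
  `|\sum_(k < n) (u (i + k.+1)%N - z)| <= cm_sup n u z i.
Proof.
apply: le_trans (le_bigmax 0 (fun A : {set 'I_n} =>
  `|\sum_(k in A) (u (i + k.+1)%N - z)|) [set: 'I_n]%SET).
by rewrite [X in _ <= `|X|](eq_bigl xpredT) // => k; rewrite inE.
Qed.

Lemma displacement_le_cm_sup (T : X -> X) (u : nat -> X) (z : X) (n i : nat) :
  n%:R * `|T z - z| <= cm_sup n u z i +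
    `|\sum_(k < n) (T (u (i + k.+1)%N) - u (i + k.+1)%N)| + cm_sup n (T \o u) (T z) i.
Proof.
have -> : n%:R * `|T z - z| = `|\sum_(k < n) (u (i + k.+1)%N - z) +
    \sum_(k < n) (T (u (i + k.+1)%N) - u (i + k.+1)%N) -
    \sum_(k < n) (T (u (i + k.+1)%N) - T z)|.
  rewrite -big_split -sumrB /= (eq_bigr (fun=> T z - z)) => [|k _].
    by rewrite sumr_const card_ord normrMn mulr_natl.
  by rewrite [_ - z + _]addrC subrKA opprB addrC subrKA.
apply: le_trans (ler_normB _ _) _; apply: lerD; last exact: (norm_sum_le_cm_sup n (T \o u)).
by apply: le_trans (ler_normD _ _) _; rewrite lerD2r norm_sum_le_cm_sup.
Qed.

Lemma cm_nonexpansive_displacement_le (C : set X) (T : X -> X) (u : nat -> X) (z : X)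
    (n : nat) (B : R) :
  cm_nonexpansive C T -> C z -> (forall i, C (u i)) ->
  (fun i => T (u i) - u i) @ \oo --> 0 ->
  (\forall i \near \oo, cm_sup n u z i <= B) ->
  n%:R * `|T z - z| <= 2 * B.
Proof.
move=> [_ [_ cmT]] Cz Cu /cvgrPdist_le Tu_u uB; apply/ler_addgt0Pr => e e0.
have en0 : 0 < e / n.+1%:R by rewrite divr_gt0.
have small : \forall i \near \oo,
    `|\sum_(k < n) (T (u (i + k.+1)%N) - u (i + k.+1)%N)| <= e.
  have [J _ TuJ] := Tu_u _ en0; exists J => // i /= Ji.
  apply: le_trans (ler_norm_sum _ _ _) _.
  apply: (@le_trans _ _ (\sum_(k < n) (e / n.+1%:R))).
    apply: ler_sum => k _; rewrite -normrN -sub0r; apply: TuJ => /=.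
    exact: leq_trans Ji (leq_addr _ _).
  rewrite sumr_const card_ord -[_ *+ n]mulr_natr mulrAC ler_pdivrMr ?ltr0n //.
  by rewrite ler_pM2l // ler_nat.
have lower : \forall i \near \oo,
    ((n%:R * `|T z - z| - B - e)%:E <= (cm_sup n (T \o u) (T z) i)%:E)%E.
  near=> i; rewrite lee_fin; have := displacement_le_cm_sup T u z n i.
  have : cm_sup n u z i <= B by near: i.
  have : `|\sum_(k < n) (T (u (i + k.+1)%N) - u (i + k.+1)%N)| <= e by near: i.
  lra.
have upper : \forall i \near \oo, ((cm_sup n u z i)%:E <= B%:E)%E.
  by apply: filterS uB => i; rewrite lee_fin.
have := le_trans (limf_esup_ge_near (FF := eventually_filter) lower)
  (le_trans (cmT n z u Cz Cu) (limf_esup_le_near upper)).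
by rewrite lee_fin; lra.
Unshelve. all: by end_near. Qed.

End cm_displacement.

Section approximate_fixed_points.
Context {R : realType} {X : normedModType R} (C : set X).

Lemma contraction_approx_fixed_point (S : X -> X) (t D : R) (x0 : X) :
  C x0 -> maps_into C S -> 0 <= t < 1 ->
  (forall x y, C x -> C y -> `|S x - S y| <= t * `|x - y|) ->
  (forall x y, C x -> C y -> `|x - y| <= D) ->
  forall e, 0 < e -> exists2 x, C x & `|S x - x| <= e.
Proof.
move=> Cx0 SC /andP[t0 t1] S_contr CD e e0.
have D0 : 0 <= D by apply: le_trans (CD _ _ Cx0 Cx0); exact: normr_ge0.
pose y n := iter n S x0.
have Cy n : C (y n) by elim: n => [|n IHn] //=; exact: SC.
have Sy_y n : `|S (y n) - y n| <= t ^+ n * D.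
  elim: n => [|n IHn]; first by rewrite expr0 mul1r CD //; exact: SC.
  apply: le_trans (S_contr _ _ (SC _ (Cy n)) (Cy n)) _.
  by rewrite exprS -mulrA ler_wpM2l.
have eD0 : 0 < e / (D + 1) by rewrite divr_gt0 // ltr_wpDl.
have /cvgrPdist_le /(_ _ eD0) [N _ tN] := @cvg_expr _ t ltac:(by rewrite ger0_norm).
exists (y N) => //; apply: le_trans (Sy_y N) _.
have := tN N (leqnn N); rewrite /= sub0r normrN ger0_norm ?exprn_ge0 //.
rewrite ler_pdivlMr ?ltr_wpDl // => tND; apply: le_trans tND.
by rewrite ler_wpM2l ?exprn_ge0 // lerDl.
Qed.

Lemma nonexpansive_approx_fixed_point (T : X -> X) :
  C !=set0 -> bounded_subset C -> convex_subset C -> maps_into C T ->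
  nonexpansive_on C T -> forall e, 0 < e -> exists2 x, C x & `|T x - x| <= e.
Proof.
move=> [x0 Cx0] [M CM] C_cvx TC T_ne e e0.
pose D := M + M.
have CD x y : C x -> C y -> `|x - y| <= D.
  by move=> Cx Cy; apply: le_trans (ler_normB _ _) _; apply: lerD; exact: CM.
pose s := Num.min 1 (e / (2 * (D + 1))).
have D0 : 0 <= D by apply: le_trans (CD _ _ Cx0 Cx0); exact: normr_ge0.
have s0 : 0 < s by rewrite lt_min ltr01 divr_gt0 // mulr_gt0 // ltr_wpDl.
have s1 : s <= 1 by rewrite ge_min lexx.
have sD : s * D <= e / 2.
  apply: le_trans (_ : e / (2 * (D + 1)) * D <= _).
    by rewrite ler_wpM2r // ge_min lexx orbT.
  rewrite mulrAC ler_pdivrMr ?mulr_gt0 ?ltr_wpDl //.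
  have -> : e / 2 * (2 * (D + 1)) = e * D + e by field.
  by rewrite lerDl ltW.
pose t := 1 - s; pose S x := t *: T x + (1 - t) *: x0.
have t0 : 0 <= t by rewrite subr_ge0.
have t1 : t < 1 by rewrite ltrBlDr ltrDl.
have SC : maps_into C S by move=> x Cx; apply: C_cvx => //; [exact: TC|exact: ltW].
have S_contr x y : C x -> C y -> `|S x - S y| <= t * `|x - y|.
  move=> Cx Cy; rewrite /S /= (opprD (t *: T y)) addrACA subrr addr0 -scalerBr normrZ.
  by rewrite ger0_norm // ler_wpM2l ?T_ne.
have t01 : 0 <= t < 1 by rewrite t0 t1.
have e20 : 0 < e / 2 by rewrite divr_gt0.
have [x Cx Sx] := contraction_approx_fixed_point S t D x0 Cx0 SC t01 S_contr CD _ e20.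
exists x => //; rewrite -(subrK (S x) (T x)) -addrA (splitr e).
apply: le_trans (ler_normD _ _) _; apply: lerD => //.
rewrite /S /= opprD addrA -{1}(scale1r (T x)) -scalerBl -scalerBr normrZ subKr.
rewrite ger0_norm; last exact: ltW.
apply: le_trans _ sD; apply: ler_wpM2l; first exact: ltW.
by apply: CD => //; exact: TC.
Qed.

Lemma nonexpansive_approx_fixed_point_seq (T : X -> X) :
  C !=set0 -> bounded_subset C -> convex_subset C -> maps_into C T ->
  nonexpansive_on C T ->
  exists2 x : nat -> X, (forall n, C (x n)) & (fun n => T (x n) - x n) @ \oo --> 0.
Proof.
move=> C0 C_bd C_cvx TC T_ne.
have approx n : exists x, C x /\ `|T x - x| <= n.+1%:R^-1.
  have n0 : 0 < n.+1%:R^-1 :> R by rewrite invr_gt0.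
  have [x Cx Tx] := nonexpansive_approx_fixed_point T C0 C_bd C_cvx TC T_ne _ n0.
  by exists x.
have [x Cx] := choice approx.
exists x => [n|]; first by case: (Cx n).
apply/cvgrPdist_le => e e0; have [N _ invN] := near_infty_natSinv_lt (PosNum e0).
exists N => // n /= Nn; rewrite sub0r normrN; have [_ Txn] := Cx n.
exact: le_trans Txn (ltW (invN _ Nn)).
Qed.

End approximate_fixed_points.

Section hilbertian.
Context {R : realType} {X : normedModType R} {H : completeNormedModType R}
  {ip : H -> H -> R}.
Hypothesis hip : inner_product_inducing_norm ip.
Variables (f : {linear X -> H}) (g : H -> X) (c1 c2 : R).
Hypotheses (fK : cancel f g) (gK : cancel g f).
Hypotheses (f_bounded : forall x, `|f x| <= c1 * `|x|)
  (g_bounded : forall h, `|g h| <= c2 * `|h|).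

Lemma inverse_raddfB u v : g (u - v) = g u - g v.
Proof. by rewrite -{1}(gK u) -{1}(gK v) -linearB fK. Qed.

Lemma inverse_raddf_sum I (r : seq I) (P : pred I) (F : I -> H) :
  g (\sum_(i <- r | P i) F i) = \sum_(i <- r | P i) g (F i).
Proof. by rewrite -(eq_bigr _ (fun i _ => gK (F i))) -linear_sum fK. Qed.

Lemma inverse_norm_le h : `|g h| <= `|c2| * `|h|.
Proof. by apply: le_trans (g_bounded h) _; rewrite ler_wpM2r ?ler_norm. Qed.

Lemma cesaro_mean_limit_mem (C : set X) (u : nat -> X) (zH : H) :
  closed C -> convex_subset C -> (forall i, C (u i)) ->
  cesaro_mean (f \o u) @ \oo --> zH -> C (g zH).
Proof.
move=> C_cl C_cvx Cu /cvgrPdist_le cz.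
have Cu_mean : \forall N \near \oo, C (cesaro_mean u N).
  by apply: nearW => N; exact: cesaro_mean_convex.
apply: (closed_cvg C C_cl Cu_mean).
apply/cvgrPdist_le => e e0; have d0 : 0 < e / (`|c2| + 1) by rewrite divr_gt0 ?ltr_wpDl.
apply: filterS (cz _ d0) => N /= zN.
rewrite -[cesaro_mean u N]fK linear_cesaro_mean -inverse_raddfB.
apply: le_trans (inverse_norm_le _) _; apply: le_trans (ler_wpM2l _ zN) _ => //.
by rewrite mulrA ler_pdivrMr ?ltr_wpDl // mulrC ler_pM2l // lerDl.
Qed.

Lemma cm_sup_near_le (u : nat -> X) (zH : H) (L : R) (m : nat) : (0 < m)%N -> 0 < L ->
  (forall k, `|f (u k) - zH| <= L) ->
  offdiag_cvg (fun i j => ip (f (u i) - zH) (f (u j) - zH)) 0 ->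
  \forall i \near \oo, cm_sup (m * m) u (g zH) i <= `|c2| * (2 * m%:R * L).
Proof.
move=> m0 L0 uL orth.
have e0 : 0 < L ^+ 2 / (m * m)%N%:R by rewrite divr_gt0 ?exprn_gt0 ?ltr0n ?muln_gt0 ?m0.
have ip_sym i j : ip (f (u i) - zH) (f (u j) - zH) = ip (f (u j) - zH) (f (u i) - zH).
  exact: ipC.
have [J orthJ] := offdiag_cvg_sym _ _ ip_sym orth _ e0.
exists J => // i /= Ji; apply: bigmax_le => [|A _].
  by rewrite !mulr_ge0 //; exact: ltW.
rewrite (eq_bigr (fun k : 'I_(m * m)%N => g (f (u (i + k.+1)%N) - zH))); last first.
  by move=> k _; rewrite inverse_raddfB fK.
rewrite -inverse_raddf_sum; apply: le_trans (inverse_norm_le _) _; rewrite ler_wpM2l //.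
apply: (norm_sum_le_sqrt_card hip) => // k l kl.
rewrite -[ip _ _]subr0; apply: orthJ; rewrite ?(leq_trans Ji) ?leq_addr //.
by rewrite eqn_add2l eqSS.
Qed.

Lemma hilbertian_cm_nonexpansive_fixed_point (C : set X) (T : X -> X) :
  C !=set0 -> bounded_subset C -> closed C -> convex_subset C -> cm_nonexpansive C T ->
  exists x, C x /\ T x = x.
Proof.
move=> C0 C_bd C_cl C_cvx T_cm; have [TC [T_ne _]] := T_cm.
have [x Cx Tx_x] := nonexpansive_approx_fixed_point_seq C T C0 C_bd C_cvx TC T_ne.
have [M CM] := C_bd; pose L := `|c1| * M.
have fxL k : `|f (x k)| <= L.
  apply: le_trans (f_bounded _) _; apply: le_trans (ler_wpM2r _ (ler_norm c1)) _ => //.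
  by rewrite ler_wpM2l ?CM.
have [m m_incr [zH cz orth]] := bounded_seq_weak_limit_subseq hip (f \o x) L fxL.
have Cz : C (g zH) by apply: (cesaro_mean_limit_mem C (x \o m)) => // i; exact: Cx.
have Tu_u : (fun i => T (x (m i)) - x (m i)) @ \oo --> 0.
  exact: cvg_comp (increasing_seq_cvg _ m_incr) Tx_x.
pose L' := L + `|zH| + 1.
have L'0 : 0 < L' by rewrite ltr_wpDl ?addr_ge0 ?(le_trans _ (fxL 0%N)).
have cL' k : `|f (x (m k)) - zH| <= L'.
  by have := fxL (m k); have := ler_normB (f (x (m k))) zH; rewrite /L'; lra.
exists (g zH); split => //; apply/eqP; rewrite -subr_eq0 -normr_le0.
apply: (le0_of_bounded_natmul _ (4%:R * (`|c2| * L'))) => k k0.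
have := cm_nonexpansive_displacement_le C T (x \o m) (g zH) (k * k) _ T_cm Cz
  (fun i => Cx (m i)) Tu_u (cm_sup_near_le (x \o m) _ _ _ k0 L'0 cL' orth).
have -> : 2 * (`|c2| * (2 * k%:R * L')) = k%:R * (4%:R * (`|c2| * L')) by ring.
by rewrite natrM -mulrA ler_pM2l // ltr0n.
Qed.

End hilbertian.

Theorem corollary4p11 (R : realType) (X : completeNormedModType R) :
  isomorphic_to_Hilbert X ->
  forall (C : set X), C !=set0 -> bounded_subset C -> closed C -> convex_subset C ->
  forall T : X -> X, cm_nonexpansive C T ->
  exists x, C x /\ T x = x.
Proof.
move=> [H [ip [f [g [hip fK gK [c1 f_bd] [c2 g_bd]]]]]].
move=> C C0 C_bd C_cl C_cvx T T_cm.
exact: (hilbertian_cm_nonexpansive_fixed_point hip f g c1 c2 fK gK f_bd g_bd C T).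
Qed.
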